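(* Under the assumptions of the convergence setting (loss $0\le\ell\le A$; some $\theta^*$ and $\delta^*>0$ with $\theta^*\cdot\phi^t_{\Delta y}\ge\delta^*$ for all $t$ and $y\in\mathcal{Y}^t$), assume further that $\|\phi(x_t,y)\|_2\le R$ for all $t$ and all $y\in\mathcal{Y}(x_t)$. Then the cumulative hinge loss of the online learning framework satisfies $$\sum_{t=1}^T\mathcal{H}_{\delta_t}(\theta_t,(x_t,y_t))\le 8A\left(\frac{R\|\theta^*\|}{\delta^*}\right)^2.$$
   Context: Each example consists of an input $x_t$ with a finite set $\mathcal{Y}(x_t)$ of feasible outputs and a correct output $y_t\in\mathcal{Y}(x_t)$; a feature map $\phi(x,y)\in\mathbb{R}^F$ is given. Write $\mathcal{Y}^t=\mathcal{Y}(x_t)\setminus\{y_t\}$ and $\phi^t_{\Delta y}=\phi(x_t,y_t)-\phi(x_t,y)$. The framework: $\theta_1=0$; for $t=1,\dots,T$: predict $\hat y_t\in\arg\max_{y\in\mathcal{Y}(x_t)}\theta_t\cdot\phi(x_t,y)$, suffer loss $\delta_t=\ell(y_t,\hat y_t)$, and set $\theta_{t+1}=\arg\min_{\theta'}\|\theta'-\theta_t\|_2^2$ subject to $\theta'\cdot\phi^t_{\Delta y}\ge\delta_t$ for all $y\in\mathcal{Y}^t$. The hinge loss is $\mathcal{H}_{\delta_t}(\theta_t,(x_t,y_t))=\max\bigl(0,\max_{y\in\mathcal{Y}^t}(\delta_t-\theta_t\cdot\phi^t_{\Delta y})\bigr)$. All norms are Euclidean. *)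

From HB Require Import structures.
From mathcomp Require Import all_boot all_order all_algebra.
Set Implicit Arguments. Unset Strict Implicit. Unset Printing Implicit Defensive.
Import Order.TTheory GRing.Theory Num.Theory.
Local Open Scope ring_scope.

Definition dot (R : rcfType) (F : nat) (u v : 'rV[R]_F) : R :=
  \sum_(i < F) u 0 i * v 0 i.

Definition norm2 (R : rcfType) (F : nat) (u : 'rV[R]_F) : R :=
  Num.sqrt (dot u u).

Definition phiDelta (R : rcfType) (F : nat) (X : Type) (Y : Type)
  (phi : X -> Y -> 'rV[R]_F) (x : X) (yt y : Y) : 'rV[R]_F :=
  phi x yt - phi x y.

Definition hinge (R : rcfType) (F : nat) (X : Type) (Y : eqType)
  (Ys : X -> seq Y) (phi : X -> Y -> 'rV[R]_F)
  (dt : R) (th : 'rV[R]_F) (x : X) (yt : Y) : R :=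
  \big[Num.max/0]_(y <- Ys x | y != yt) (dt - dot th (phiDelta phi x yt y)).

(* Each update theta_(t+1) is the Euclidean projection of theta_t onto the convex
   set C_t of vectors meeting the margin constraints theta . phi^t_(Delta y) >= delta_t.
   For m > 0 the scaled comparator u = ((A + m) / delta_star) theta_star meets them with
   slack m, and every phi^t_(Delta y) has norm at most 2R.  Testing the projection
   property against u - k (theta_(t+1) - theta_t) shows that each step pays for its
   hinge loss by moving towards u:
     2 m H_t <= (2R)^2 (|theta_t - u|^2 - |theta_(t+1) - u|^2).
   The sum telescopes to (2R)^2 |u|^2 / (2m); taking m = A (or m -> 0 when A = 0)
   gives 8 A (R |theta_star| / delta_star)^2. *)

From HB Require Import structures.
From mathcomp Require Import all_boot all_order all_algebra.
From mathcomp Require Import ring lra.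
Import Order.TTheory GRing.Theory Num.Theory.
Local Open Scope ring_scope.
Set Implicit Arguments. Unset Strict Implicit.

Section InnerProduct.
Variables (R : rcfType) (F : nat).
Implicit Types (a b c : 'rV[R]_F) (k : R).

Lemma dotC a b : dot a b = dot b a.
Proof. by apply: eq_bigr => i _; rewrite mulrC. Qed.

Lemma dotDl a b c : dot (a + b) c = dot a c + dot b c.
Proof. by rewrite /dot -big_split; apply: eq_bigr => i _; rewrite !mxE mulrDl. Qed.

Lemma dotDr a b c : dot c (a + b) = dot c a + dot c b.
Proof. by rewrite dotC dotDl !(dotC c). Qed.

Lemma dotZl k a b : dot (k *: a) b = k * dot a b.
Proof. by rewrite /dot mulr_sumr; apply: eq_bigr => i _; rewrite !mxE mulrA. Qed.

Lemma dotZr k a b : dot b (k *: a) = k * dot b a.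
Proof. by rewrite dotC dotZl dotC. Qed.

Lemma dotNl a b : dot (- a) b = - dot a b.
Proof. by rewrite -scaleN1r dotZl mulN1r. Qed.

Lemma dotNr a b : dot b (- a) = - dot b a.
Proof. by rewrite dotC dotNl dotC. Qed.

Lemma dotBl a b c : dot (a - b) c = dot a c - dot b c.
Proof. by rewrite dotDl dotNl. Qed.

Lemma dotBr a b c : dot c (a - b) = dot c a - dot c b.
Proof. by rewrite dotDr dotNr. Qed.

Lemma dot0l a : dot 0 a = 0.
Proof. by rewrite -(scale0r 0) dotZl mul0r. Qed.

Lemma dotxx_ge0 a : 0 <= dot a a.
Proof. by apply: sumr_ge0 => i _; rewrite -expr2 sqr_ge0. Qed.

Lemma dotxx_eq0 a : (dot a a == 0) = (a == 0).
Proof.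
apply/eqP/eqP => [aa0|->]; last exact: dot0l.
apply/rowP => i; rewrite mxE; apply/eqP; rewrite -sqrf_eq0 expr2.
by move: aa0 => /psumr_eq0P-> // j _; rewrite -expr2 sqr_ge0.
Qed.

Lemma norm2_ge0 a : 0 <= norm2 a.
Proof. exact: sqrtr_ge0. Qed.

Lemma norm2_sqr a : norm2 a ^+ 2 = dot a a.
Proof. by rewrite sqr_sqrtr // dotxx_ge0. Qed.

Lemma cauchy_schwarz_sqr a b : dot a b ^+ 2 <= dot a a * dot b b.
Proof.
have [/eqP|b_neq0] := eqVneq (dot b b) 0.
  by rewrite dotxx_eq0 => /eqP->; rewrite dotC !dot0l expr0n mulr0.
have bb_gt0 : 0 < dot b b by rewrite lt_def b_neq0 dotxx_ge0.
(* expand |a - l b|^2 >= 0 at the minimizing scalar l = (a.b)/(b.b) *)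
have := dotxx_ge0 (a - (dot a b / dot b b) *: b).
rewrite !(dotBl, dotBr, dotZl, dotZr) (dotC b a) divfK // subrr mulr0 subr0.
set aa := dot a a; set ab := dot a b; set bb := dot b b => h.
rewrite -subr_ge0 (_ : aa * bb - ab ^+ 2 = (aa - ab / bb * ab) * bb).
  exact: mulr_ge0 h (ltW bb_gt0).
by field; rewrite gt_eqF.
Qed.

Lemma cauchy_schwarz a b : `|dot a b| <= norm2 a * norm2 b.
Proof.
rewrite -(ler_pXn2r (_ : (0 < 2)%N)) ?nnegrE ?mulr_ge0 ?norm2_ge0 //.
by rewrite real_normK ?num_real // exprMn !norm2_sqr cauchy_schwarz_sqr.
Qed.

Lemma normr_dotB_le a b c r :
  norm2 a <= r -> norm2 b <= r -> `|dot c (a - b)| <= 2 * r * norm2 c.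
Proof.
move=> ar br; rewrite dotBr.
have := cauchy_schwarz c a; have := cauchy_schwarz c b.
have c_ge0 := norm2_ge0 c.
have := ler_wpM2l c_ge0 ar; have := ler_wpM2l c_ge0 br.
have := ler_normB (dot c a) (dot c b); nra.
Qed.

Lemma dotxxDZ a b k :
  dot (a + k *: b) (a + k *: b) = dot a a + 2 * k * dot a b + k ^+ 2 * dot b b.
Proof. by rewrite !(dotDl, dotDr, dotZl, dotZr) (dotC b a); ring. Qed.

Definition sqdist a b := dot (a - b) (a - b).

Lemma sqdist_ge0 a b : 0 <= sqdist a b.
Proof. exact: dotxx_ge0. Qed.

End InnerProduct.

Section Projection.
Variables (R : rcfType) (F : nat).
Implicit Types (C : 'rV[R]_F -> Prop) (th p u w z : 'rV[R]_F).

Definition convex_set C :=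
  forall w z s, 0 <= s <= 1 -> C w -> C z -> C (w + s *: (z - w)).

Definition is_proj C th p := C p /\ forall w, C w -> sqdist p th <= sqdist w th.

Lemma sqdist_split th p u :
  sqdist th u = sqdist p th + 2 * dot (p - th) (u - p) + sqdist p u.
Proof.
rewrite /sqdist !(dotBl, dotBr) (dotC th p) (dotC th u) (dotC p u); ring.
Qed.

Lemma proj_variational C th p z :
  convex_set C -> is_proj C th p -> C z -> 0 <= dot (p - th) (z - p).
Proof.
move=> convC [Cp p_min] Cz; rewrite leNgt; apply/negP => a_lt0.
set a := dot (p - th) (z - p) in a_lt0; set b := dot (z - p) (z - p).
have b_ge0 : 0 <= b := dotxx_ge0 _.
(* moving from p towards z by the step s decreases the distance to th *)
set s := - a / (b - a).
have s_gt0 : 0 < s by rewrite divr_gt0 //; lra.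
have s_le1 : s <= 1 by rewrite ler_pdivrMr //; lra.
have sbaE : s * (b - a) = - a by rewrite mulfVK //; lra.
have s01 : 0 <= s <= 1 by rewrite (ltW s_gt0) s_le1.
have := p_min _ (convC p z s s01 Cp Cz).
by rewrite /sqdist addrAC dotxxDZ -/a -/b; nra.
Qed.

Lemma proj_pythagoras C th p u :
  convex_set C -> is_proj C th p -> C u -> sqdist p th + sqdist p u <= sqdist th u.
Proof.
move=> convC p_proj Cu; have := proj_variational convC p_proj Cu.
by rewrite (sqdist_split th p) -addrA addrCA lerDr pmulr_rge0.
Qed.

End Projection.

Section MarginProjection.
Variables (R : rcfType) (F : nat) (I : Type) (Q : pred I) (g : I -> 'rV[R]_F).

Definition margin_set (d : R) (w : 'rV[R]_F) := forall i, Q i -> d <= dot w (g i).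

Lemma margin_set_convex d : convex_set (margin_set d).
Proof.
move=> w z s /andP[s_ge0 s_le1] Cw Cz i Qi.
rewrite dotDl dotZl dotBl.
have := Cw i Qi; have := Cz i Qi; nra.
Qed.

Lemma margin_set_le d1 d2 w : d1 <= d2 -> margin_set d2 w -> margin_set d1 w.
Proof. by move=> d12 w_margin i Qi; apply: le_trans d12 (w_margin i Qi). Qed.

Variables (d m K : R) (th p u : 'rV[R]_F).
Hypotheses (p_proj : is_proj (margin_set d) th p) (m_ge0 : 0 <= m)
  (u_margin : margin_set (d + m) u)
  (g_bounded : forall i v, Q i -> `|dot v (g i)| <= K * norm2 v).

Lemma margin_proj_gain :
  0 < K * norm2 (p - th) -> m * norm2 (p - th) <= K * dot (p - th) (u - p).
Proof.
set D := p - th; set n := norm2 D => Kn_gt0.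
have n_ge0 : 0 <= n := norm2_ge0 D.
have K_gt0 : 0 < K by nra.
(* the competitor u - k D stays feasible: the margin m pays for the step *)
set k := m / (K * n).
have kKn : k * (K * n) = m by rewrite mulfVK // gt_eqF.
have k_ge0 : 0 <= k by rewrite divr_ge0 // ltW.
have z_feas : margin_set d (u - k *: D).
  move=> i Qi; rewrite dotBl dotZl.
  have := u_margin Qi; have := g_bounded D Qi; rewrite -/n => gD.
  have := ler_norm (dot D (g i)); nra.
have := proj_variational (@margin_set_convex d) p_proj z_feas.
rewrite addrAC [dot _ (_ - k *: D)]dotBr dotZr -/D -norm2_sqr -/n; nra.
Qed.

Lemma margin_proj_hinge i :
  Q i -> 2 * m * (d - dot th (g i)) <= K ^+ 2 * (sqdist th u - sqdist p u).
Proof.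
move=> Qi; set D := p - th; set n := norm2 D.
have n_ge0 : 0 <= n := norm2_ge0 D.
have gap : d - dot th (g i) <= K * n.
  have := p_proj.1 i Qi; have := ler_norm (dot D (g i)); have := g_bounded D Qi.
  rewrite -/n /D dotBl => gD_le normD dp_ge.
  by apply: le_trans gD_le; apply: le_trans normD; rewrite lerD2r.
have [Kn_gt0 | Kn_le0] := ltP 0 (K * n).
  have K_gt0 : 0 < K by nra.
  rewrite (sqdist_split th p) addrK /sqdist -norm2_sqr -/D -/n.
  have := ler_wpM2l (ltW K_gt0) (margin_proj_gain Kn_gt0); rewrite -/D -/n.
  have := ler_wpM2l m_ge0 gap; nra.
apply: (@le_trans _ _ 0).
  by have := ler_wpM2l m_ge0 gap; have := mulr_ge0_le0 m_ge0 Kn_le0; lra.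
have u_feas : margin_set d u by apply: margin_set_le u_margin; rewrite lerDl.
apply: mulr_ge0; first exact: sqr_ge0.
rewrite subr_ge0; have := proj_pythagoras (@margin_set_convex d) p_proj u_feas.
have := sqdist_ge0 p th; lra.
Qed.

End MarginProjection.

Arguments margin_set_convex {R F I Q g} d.

(* inf_(m > 0) (a + m)^2 / m = 4 a, attained at m = a when a > 0 *)
Lemma le_of_margin_family (R : realFieldType) (s c a : R) :
  0 <= c -> 0 <= a -> (forall m, 0 < m -> s <= c * ((a + m) ^+ 2 / m)) ->
  s <= c * (4 * a).
Proof.
move=> c_ge0 a_ge0 s_le; have [a_gt0 | a_le0] := ltP 0 a.
  by rewrite -[4 * a](_ : (a + a) ^+ 2 / a = _) ?s_le //; field; rewrite gt_eqF.
have a0 : a = 0 by apply/le_anti; rewrite a_le0 a_ge0.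
subst a.
apply/ler_addgt0Pr => e e_gt0; rewrite mulr0 mulr0 add0r.
have m_gt0 : 0 < e / (c + 1) by rewrite divr_gt0 // ltr_wpDl.
apply: le_trans (s_le _ m_gt0) _; rewrite add0r expr2 mulfK ?gt_eqF //.
by rewrite mulrA ler_pdivrMr ?ltr_wpDl // mulrC ler_wpM2l ?ltW // ltrDl.
Qed.

Section OnlineUpdate.
Variables (R : rcfType) (F : nat) (X : Type) (Y : eqType)
  (Ys : X -> seq Y) (phi : X -> Y -> 'rV[R]_F) (loss : Y -> Y -> R) (A : R)
  (T : nat) (x : nat -> X) (y : nat -> Y) (yhat : nat -> Y)
  (theta : nat -> 'rV[R]_F) (theta_star : 'rV[R]_F) (delta_star Rb : R).
Hypotheses
  (hloss : forall a b : Y, 0 <= loss a b <= A)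
  (hy : forall t, (1 <= t <= T)%N -> y t \in Ys (x t))
  (h0 : theta 1%N = 0)
  (hupd_feas : forall t, (1 <= t <= T)%N -> forall y', y' \in Ys (x t) -> y' != y t ->
       loss (y t) (yhat t) <= dot (theta t.+1) (phiDelta phi (x t) (y t) y'))
  (hupd_min : forall t, (1 <= t <= T)%N -> forall th' : 'rV[R]_F,
       (forall y', y' \in Ys (x t) -> y' != y t ->
          loss (y t) (yhat t) <= dot th' (phiDelta phi (x t) (y t) y')) ->
       norm2 (theta t.+1 - theta t) ^+ 2 <= norm2 (th' - theta t) ^+ 2)
  (hdstar : 0 < delta_star)
  (hsep : forall t, (1 <= t <= T)%N -> forall y', y' \in Ys (x t) -> y' != y t ->
       delta_star <= dot theta_star (phiDelta phi (x t) (y t) y'))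
  (hR : forall t, (1 <= t <= T)%N -> forall y', y' \in Ys (x t) ->
       norm2 (phi (x t) y') <= Rb).

Let Q t : pred Y := fun y' => (y' \in Ys (x t)) && (y' != y t).
Let g t := phiDelta phi (x t) (y t).
Let delta t := loss (y t) (yhat t).

Lemma update_is_proj t : (1 <= t <= T)%N ->
  is_proj (margin_set (Q t) (g t) (delta t)) (theta t) (theta t.+1).
Proof.
move=> t_in; split=> [y' /andP[]|w w_feas]; first exact: hupd_feas.
rewrite /sqdist -!norm2_sqr; apply: hupd_min => // y' y'_in y'_ne.
by apply: w_feas; rewrite /Q y'_in y'_ne.
Qed.

Variables (m : R).
Hypothesis m_gt0 : 0 < m.

Let u := ((A + m) / delta_star) *: theta_star.

Lemma comparator_margin t : (1 <= t <= T)%N ->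
  margin_set (Q t) (g t) (delta t + m) u.
Proof.
move=> t_in y' /andP[y'_in y'_ne]; rewrite dotZl.
have [delta_ge0 delta_leA] := andP (hloss (y t) (yhat t)).
have c_ge0 : 0 <= (A + m) / delta_star.
  apply: divr_ge0; last exact: ltW.
  exact: addr_ge0 (le_trans delta_ge0 delta_leA) (ltW m_gt0).
have := ler_wpM2l c_ge0 (hsep t_in y'_in y'_ne).
by rewrite divfK ?gt_eqF //; apply: le_trans; rewrite lerD2r.
Qed.

Lemma hinge_le_potential_drop t : (1 <= t <= T)%N ->
  hinge Ys phi (delta t) (theta t) (x t) (y t)
    <= (2 * Rb) ^+ 2 / (2 * m) * (sqdist (theta t) u - sqdist (theta t.+1) u).
Proof.
move=> t_in; have proj := update_is_proj t_in.
have u_margin := comparator_margin t_in.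
have Rb_ge0 : 0 <= Rb := le_trans (norm2_ge0 _) (hR t_in (hy t_in)).
have g_bounded i v : Q t i -> `|dot v (g t i)| <= 2 * Rb * norm2 v.
  by case/andP=> i_in _; exact: normr_dotB_le (hR t_in (hy t_in)) (hR t_in i_in).
rewrite /hinge big_seq_cond; apply: bigmax_le => [|y' y'_Q].
  apply: mulr_ge0; first by rewrite divr_ge0 ?sqr_ge0 ?mulr_ge0 ?ltW.
  have u_feas : margin_set (Q t) (g t) (delta t) u.
    by apply: margin_set_le u_margin; rewrite lerDl ltW.
  have := proj_pythagoras (margin_set_convex _) proj u_feas.
  by have := sqdist_ge0 (theta t.+1) (theta t); rewrite subr_ge0; lra.
rewrite mulrAC ler_pdivlMr ?mulr_gt0 // mulrC.
exact: margin_proj_hinge proj (ltW m_gt0) u_margin g_bounded _ y'_Q.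
Qed.

Lemma hinge_sum_le :
  \sum_(1 <= t < T.+1) hinge Ys phi (delta t) (theta t) (x t) (y t)
    <= 2 * (Rb * norm2 theta_star / delta_star) ^+ 2 * ((A + m) ^+ 2 / m).
Proof.
pose Phi t := sqdist (theta t) u.
set c := (2 * Rb) ^+ 2 / (2 * m).
have c_ge0 : 0 <= c by rewrite divr_ge0 ?sqr_ge0 ?mulr_ge0 ?ltW.
apply: le_trans (_ : \sum_(1 <= t < T.+1) c * (Phi t - Phi t.+1) <= _).
  by rewrite !big_nat; apply: ler_sum => t; apply: hinge_le_potential_drop.
have -> : \sum_(1 <= t < T.+1) c * (Phi t - Phi t.+1) = c * (Phi 1%N - Phi T.+1).
  rewrite -mulr_sumr -opprB -telescope_sumr // -sumrN.
  by congr (_ * _); apply: eq_bigr => t _; rewrite opprB.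
have Phi1 : Phi 1%N = ((A + m) / delta_star) ^+ 2 * norm2 theta_star ^+ 2.
  by rewrite /Phi /sqdist h0 sub0r dotNl dotNr opprK dotZl dotZr norm2_sqr; ring.
apply: le_trans (_ : c * Phi 1%N <= _).
  by rewrite ler_wpM2l // lerBlDr lerDl sqdist_ge0.
rewrite Phi1 /c le_eqVlt; apply/orP; left; apply/eqP.
by field; rewrite !gt_eqF.
Qed.

End OnlineUpdate.

Theorem theorem2
  (R : rcfType) (F : nat) (X : Type) (Y : eqType)
  (Ys : X -> seq Y) (phi : X -> Y -> 'rV[R]_F) (loss : Y -> Y -> R) (A : R)
  (T : nat) (x : nat -> X) (y : nat -> Y) (yhat : nat -> Y)
  (theta : nat -> 'rV[R]_F)
  (theta_star : 'rV[R]_F) (delta_star : R) (Rb : R)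
  (hloss : forall a b : Y, 0 <= loss a b <= A)
  (hy : forall t, (1 <= t <= T)%N -> y t \in Ys (x t))
  (h0 : theta 1%N = 0)
  (hpred_in : forall t, (1 <= t <= T)%N -> yhat t \in Ys (x t))
  (hpred_max : forall t, (1 <= t <= T)%N -> forall y', y' \in Ys (x t) ->
       dot (theta t) (phi (x t) y') <= dot (theta t) (phi (x t) (yhat t)))
  (hupd_feas : forall t, (1 <= t <= T)%N -> forall y', y' \in Ys (x t) -> y' != y t ->
       loss (y t) (yhat t) <= dot (theta t.+1) (phiDelta phi (x t) (y t) y'))
  (hupd_min : forall t, (1 <= t <= T)%N -> forall th' : 'rV[R]_F,
       (forall y', y' \in Ys (x t) -> y' != y t ->
          loss (y t) (yhat t) <= dot th' (phiDelta phi (x t) (y t) y')) ->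
       norm2 (theta t.+1 - theta t) ^+ 2 <= norm2 (th' - theta t) ^+ 2)
  (hdstar : 0 < delta_star)
  (hsep : forall t, (1 <= t <= T)%N -> forall y', y' \in Ys (x t) -> y' != y t ->
       delta_star <= dot theta_star (phiDelta phi (x t) (y t) y'))
  (hR : forall t, (1 <= t <= T)%N -> forall y', y' \in Ys (x t) ->
       norm2 (phi (x t) y') <= Rb) :
  \sum_(1 <= t < T.+1) hinge Ys phi (loss (y t) (yhat t)) (theta t) (x t) (y t)
    <= 8 * A * (Rb * norm2 theta_star / delta_star) ^+ 2.
Proof.
have A_ge0 : 0 <= A by case/andP: (hloss (y 0%N) (y 0%N)) => /le_trans; apply.
have c_ge0 : 0 <= 2 * (Rb * norm2 theta_star / delta_star) ^+ 2.
  by rewrite mulr_ge0 ?sqr_ge0.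
rewrite (_ : 8 * A * _ = 2 * (Rb * norm2 theta_star / delta_star) ^+ 2 * (4 * A));
  last by ring.
apply: le_of_margin_family c_ge0 A_ge0 _ => m m_gt0.
exact (hinge_sum_le hloss hy h0 hupd_feas hupd_min hdstar hsep hR m_gt0).
Qed.
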